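(* Let $A$ be a finite skew brace such that $\Theta(A)$ has exactly one vertex. Then $(A,+)$ is abelian.
   Context: A skew brace is a triple $(A,+,\circ)$ where $(A,+)$ and $(A,\circ)$ are groups with $a\circ(b+c)=a\circ b-a+a\circ c$. $\lambda_a(b)=-a+a\circ b$; $\theta_{(a,b)}(c)=a+\lambda_b(c)-a$ defines an action of $(A,+)\rtimes_\lambda(A,\circ)$ on $(A,+)$ by automorphisms. $\Theta(A)$ is the graph whose vertices are the $\theta$-orbits of size $>1$, two distinct vertices $L_1,L_2$ adjacent iff $\gcd(|L_1|,|L_2|)\ne1$. *)

From mathcomp Require Import all_boot.
Set Implicit Arguments. Unset Strict Implicit. Unset Printing Implicit Defensive.

Record is_group (T : Type) (mul : T -> T -> T) (inv : T -> T) (e : T) : Prop := {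
  grp_assoc : forall x y z, mul x (mul y z) = mul (mul x y) z;
  grp_id_l  : forall x, mul e x = x;
  grp_id_r  : forall x, mul x e = x;
  grp_inv_l : forall x, mul (inv x) x = e;
  grp_inv_r : forall x, mul x (inv x) = e }.

Record skew_brace (T : finType) := SkewBrace {
  sb_add : T -> T -> T;
  sb_opp : T -> T;
  sb_zero : T;
  sb_circ : T -> T -> T;
  sb_cinv : T -> T;
  sb_one : T;
  sb_add_group : is_group sb_add sb_opp sb_zero;
  sb_circ_group : is_group sb_circ sb_cinv sb_one;
  sb_compat : forall a b c,
    sb_circ a (sb_add b c) =
    sb_add (sb_add (sb_circ a b) (sb_opp a)) (sb_circ a c) }.

Section SkewBraceDefs.
Variables (T : finType) (A : skew_brace T).
Local Notation "x + y" := (sb_add A x y).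
Local Notation "- x" := (sb_opp A x).
Local Notation "x 'o' y" := (sb_circ A x y) (at level 40).

Definition sb_lambda (a b : T) : T := - a + (a o b).

Definition sb_theta (a b c : T) : T := (a + sb_lambda b c) + - a.

(* the theta-orbit of c under (A,+) x|_lambda (A,o) *)
Definition theta_orbit (c : T) : {set T} :=
  [set sb_theta a b c | a in T, b in T].

Definition Theta_vertices : {set {set T}} :=
  [set L in [set theta_orbit c | c in T] | 1 < #|L|].

Definition Theta_adj (L1 L2 : {set T}) : bool :=
  [&& L1 \in Theta_vertices, L2 \in Theta_vertices, L1 != L2 &
      gcdn #|L1| #|L2| != 1].

Definition add_abelian : Prop := forall x y : T, x + y = y + x.
End SkewBraceDefs.

(* Every element outside the unique non-trivial theta-orbit L has a trivial
   orbit, so it is fixed by conjugation and is central. If (A,+) were not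
   abelian, then L would be exactly the set of non-central elements, since theta
   preserves centrality in both directions; theta also preserves additive orders,
   so all non-central elements have one order n. With p the least prime factor
   of n, (A,+) is then a p-group, and |L| divides |A|^2 because the fibres of
   (a,b) |-> theta_(a,b)(c) all have the same size. Hence |A \ Z| and |Z| are
   powers of p adding up to a power of p, so they are equal, |A : Z| = 2, A/Z is
   cyclic and (A,+) is abelian after all. *)

From HB Require Import structures.
From mathcomp Require Import all_boot all_fingroup all_solvable.
Set Implicit Arguments. Unset Strict Implicit. Unset Printing Implicit Defensive.

Lemma pfactor_add_pfactor p i j k : prime p -> p ^ i + p ^ j = p ^ k -> i = j.
Proof.
move=> pp; wlog: i j / i < j => [hwlog|lt_ij e].
  case: (ltngtP i j) => [lt_ij|lt_ji|//] e; first exact: hwlog.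
  by rewrite (hwlog j i) // addnC.
have lt_ik : i < k.
  by rewrite -(ltn_exp2l _ _ (prime_gt1 pp)) -e -addn1 leq_add2l expn_gt0 prime_gt0.
have : p ^ i.+1 %| p ^ i + p ^ j by rewrite e dvdn_Pexp2l ?prime_gt1.
by rewrite dvdn_addl ?dvdn_Pexp2l ?prime_gt1 // ltnn.
Qed.

Lemma pnat_add_pnat_eq p m n : prime p ->
  p.-nat m -> p.-nat n -> p.-nat (m + n) -> m = n.
Proof.
move=> pp /p_natP[i ->] /p_natP[j ->] /p_natP[k e].
by rewrite (pfactor_add_pfactor pp e).
Qed.

Section NoncentralElements.
Local Open Scope group_scope.
Variable gT : finGroupType.
Implicit Types x z : gT.
Local Notation Z := 'Z([set: gT]).

Lemma centerT_P x : reflect (forall w, x * w = w * x) (x \in Z).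
Proof.
apply: (iffP (centerP [set: gT] x)) => [[_ cx] w | cx]; first exact: cx w (in_setT w).
by split=> [|w _]; [exact: in_setT | exact: cx].
Qed.

Lemma pgroup_noncentral_not_pnat p : prime p -> p.-group [set: gT] ->
  ~~ p.-nat #|~: Z|.
Proof.
move=> pp pG; apply/negP => pL.
have cardE : (#|~: Z| + #|Z|)%N = #|[set: gT]| by rewrite addnC cardsC cardsT.
have pZ : p.-nat #|Z| := pnat_dvd (cardSg (center_sub _)) pG.
have eLZ : #|~: Z| = #|Z|.
  by apply: (pnat_add_pnat_eq pp pL pZ); rewrite cardE.
have index2 : #|[set: gT] : Z| = 2.
  apply/eqP; rewrite -(eqn_pmul2l (cardG_gt0 Z)) (Lagrange (center_sub _)).
  by rewrite -cardE eLZ muln2 addnn.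
have /center_idP ZT : abelian [set: gT].
  apply: cyclic_center_factor_abelian; apply: prime_cyclic.
  by rewrite card_quotient ?index2 // normal_norm // center_normal.
by move: pL; rewrite ZT setCT cards0.
Qed.

Variable c : gT.
Hypothesis c_noncentral : c \notin Z.
Hypothesis noncentral_order : {in ~: Z, forall x, #[x] = #[c]}.
Let p := pdiv #[c].

Let order_c_gt1 : 1 < #[c].
Proof. by rewrite order_gt1; apply: contraNneq c_noncentral => ->; exact: group1. Qed.

Let p_prime : prime p. Proof. exact: pdiv_prime. Qed.

(* If c_p is central then c_p' is not, so #[c] = #[c_p'] would be a p'-number. *)
Lemma noncentral_order_pnat : p.-nat #[c].
Proof.
have [cpZ|cpZ] := boolP (c.`_p \in Z); last first.
  by rewrite -(noncentral_order (x := c.`_p)) ?in_setC //; exact: p_elt_constt.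
have cqZ : c.`_p^' \notin Z.
  by apply: contra c_noncentral => cqZ; rewrite -(consttC p c) groupM.
have p'n : p^'.-nat #[c].
  by rewrite -(noncentral_order (x := c.`_p^')) ?in_setC //; exact: p_elt_constt.
have := pnatPpi (p := p) p'n; rewrite pi_pdiv order_c_gt1 => /(_ isT).
by rewrite !inE eqxx.
Qed.

Lemma prime_dvd_card_noncentral_order q : prime q -> q %| #|[set: gT]| -> q %| #[c].
Proof.
move=> q_pr /(Cauchy q_pr)[z _ <-].
have [zZ|zZ] := boolP (z \in Z); last by rewrite noncentral_order ?in_setC.
have czZ : c * z \notin Z.
  by apply: contra c_noncentral => czZ; rewrite -(mulgK z c) groupM ?groupV.
have cz_comm : commute c z by apply/esym/(centerT_P z zZ).
have oz : #[c * z] = #[c] by rewrite noncentral_order ?in_setC.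
have := expg_order (c * z); rewrite oz expgMn // expg_order mul1g => zn1.
by rewrite order_dvdn zn1.
Qed.

Lemma noncentral_order_pgroup : p.-group [set: gT].
Proof.
apply/pgroupP => q q_pr /(prime_dvd_card_noncentral_order q_pr) q_dvd.
by apply: (pnatPpi noncentral_order_pnat); rewrite mem_primes q_pr order_gt0.
Qed.

Lemma noncentral_order_card_not_dvd : ~~ (#|~: Z| %| #|[set: gT]| ^ 2)%N.
Proof.
apply/negP => dvd.
have /negP[] := pgroup_noncentral_not_pnat p_prime noncentral_order_pgroup.
by apply: pnat_dvd dvd _; rewrite pnatX (noncentral_order_pgroup : p.-nat _).
Qed.

End NoncentralElements.

Section SkewBraceAdditiveGroup.
Variables (T : finType) (A : skew_brace T).

(* The additive group of A; the phantom argument lets the canonical group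
   structure be inferred from the type. *)
Definition sb_addT of skew_brace T : Type := T.
HB.instance Definition _ := Finite.on (sb_addT A).
HB.instance Definition _ := Finite_isGroup.Build (sb_addT A)
  (grp_assoc (sb_add_group A)) (grp_id_l (sb_add_group A)) (grp_inv_l (sb_add_group A)).

Local Open Scope group_scope.
Local Notation addT := (sb_addT A).
Implicit Types a b c x y : addT.
Local Notation Z := 'Z([set: addT]).

Definition circ x y : addT := sb_circ A x y.
Definition cinv x : addT := sb_cinv A x.

Lemma circA x y z : circ x (circ y z) = circ (circ x y) z.
Proof. exact: (grp_assoc (sb_circ_group A)). Qed.

Lemma circ1x x : circ (sb_one A) x = x.
Proof. exact: (grp_id_l (sb_circ_group A)). Qed.

Lemma circI b : injective (circ b).
Proof.
move=> x y e; rewrite -(circ1x x) -(circ1x y) -(grp_inv_l (sb_circ_group A) b).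
by rewrite -!circA [circ b x]e.
Qed.

Lemma circ_addr a b c : circ a (b * c) = circ a b * a^-1 * circ a c.
Proof. exact: (sb_compat A). Qed.

Lemma circx1 a : circ a 1 = a.
Proof.
have := circ_addr a 1 1; rewrite mulg1 => /(congr1 (fun u => (circ a 1)^-1 * u)).
rewrite mulVg -mulgA mulKg => e.
by rewrite -(mulKVg a (circ a 1)) -e mulg1.
Qed.

Lemma sb_one_addT : sb_one A = 1 :> addT.
Proof. by rewrite -[RHS]circ1x circx1. Qed.

Definition lambda b x : addT := b^-1 * circ b x.

Lemma lambdaM b x y : lambda b (x * y) = lambda b x * lambda b y.
Proof. by rewrite /lambda circ_addr -!mulgA. Qed.

Lemma lambda1 b : lambda b 1 = 1.
Proof. by rewrite /lambda circx1 mulVg. Qed.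

Lemma lambdaV b x : lambda b x^-1 = (lambda b x)^-1.
Proof. by apply/eqP; rewrite eq_mulgV1 invgK -lambdaM mulVg lambda1. Qed.

Lemma lambda_one x : lambda 1 x = x.
Proof. by rewrite /lambda invg1 mul1g -sb_one_addT circ1x. Qed.

Lemma lambda_comp b b' x : lambda b (lambda b' x) = lambda (circ b b') x.
Proof.
rewrite [lambda b' x]/lambda lambdaM lambdaV /lambda invMg invgK circA.
by rewrite !mulgA mulgK.
Qed.

Lemma lambda_inj b : injective (lambda b).
Proof. by move=> x y /mulgI /circI. Qed.

Lemma lambdaK b x : lambda b (lambda (cinv b) x) = x.
Proof.
rewrite lambda_comp /circ (grp_inv_r (sb_circ_group A)) -/(circ _ _).
by rewrite sb_one_addT lambda_one.
Qed.

Lemma lambdaX b x n : lambda b (x ^+ n) = lambda b x ^+ n.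
Proof. by elim: n => [|n IHn]; rewrite ?lambda1 // !expgS lambdaM IHn. Qed.

Lemma order_lambda b x : #[lambda b x] = #[x].
Proof.
apply/eqP; rewrite eqn_dvd !order_dvdn -lambdaX -{1}(lambda1 b).
rewrite (inj_eq (@lambda_inj b)) expg_order eqxx /=.
by rewrite -(inj_eq (@lambda_inj b)) lambda1 lambdaX expg_order.
Qed.

Lemma sb_thetaE a b c : sb_theta A a b c = a * lambda b c * a^-1 :> addT.
Proof. by []. Qed.

Lemma sb_theta_comp a b a' b' c :
  sb_theta A a b (sb_theta A a' b' c) = sb_theta A (a * lambda b a') (circ b b') c.
Proof.
rewrite !sb_thetaE (lambdaM b (a' * _)) lambdaM lambdaV lambda_comp.
by rewrite [in RHS]invMg !mulgA.
Qed.

Lemma sb_theta1 c : sb_theta A (1 : addT) (1 : addT) c = c.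
Proof. by rewrite sb_thetaE lambda_one invg1 mulg1 mul1g. Qed.

Lemma sb_thetaK a b c :
  sb_theta A (lambda (cinv b) a^-1) (cinv b) (sb_theta A a b c) = c.
Proof.
rewrite sb_theta_comp -lambdaM mulVg lambda1 /circ.
by rewrite (grp_inv_l (sb_circ_group A)) sb_one_addT sb_theta1.
Qed.

Lemma sb_theta_conjg a b c : sb_theta A a b c = lambda b c ^ a^-1.
Proof. by rewrite conjgE invgK mulgA. Qed.

Lemma order_sb_theta a b c : #[sb_theta A a b c : addT] = #[c].
Proof. by rewrite sb_theta_conjg orderJ order_lambda. Qed.

Lemma lambda_center b c : (lambda b c \in Z) = (c \in Z).
Proof.
apply/centerT_P/centerT_P => cZ w.
  by apply: (@lambda_inj b); rewrite !lambdaM cZ.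
by rewrite -(lambdaK b w) -!lambdaM cZ.
Qed.

Lemma sb_theta_center a b c : (sb_theta A a b c \in Z) = (c \in Z).
Proof.
have nZ : a^-1 \in 'N(Z) by rewrite (subsetP (normal_norm (center_normal _))) ?inE.
by rewrite sb_theta_conjg (memJ_norm _ nZ) lambda_center.
Qed.

Lemma card_sb_addT (P : {set T}) (Q : {set addT}) : P =i Q -> #|P| = #|Q|.
Proof.
move=> PQ; pose f (x : T) : addT := x.
rewrite -(card_imset P (f := f)) //; apply: eq_card => x.
by apply/imsetP/idP => [[y Py ->]|Qx]; [rewrite -PQ | exists x; rewrite ?PQ].
Qed.

Lemma sb_theta_in_orbit a b c : sb_theta A a b c \in theta_orbit A c.
Proof. exact: imset2_f. Qed.

Lemma mem_theta_orbit c : c \in theta_orbit A c.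
Proof. by rewrite -{1}(sb_theta1 c) sb_theta_in_orbit. Qed.

Definition theta_fiber c y := [set h : addT * addT | sb_theta A h.1 h.2 c == y].

Lemma card_theta_fiber_le a b c x :
  #|theta_fiber c x| <= #|theta_fiber c (sb_theta A a b x)|.
Proof.
pose f (h : addT * addT) := (a * lambda b h.1, circ b h.2).
have f_inj : injective f by move=> [x1 y1] [x2 y2] [/mulgI/lambda_inj -> /circI ->].
rewrite -(card_imset _ f_inj); apply: subset_leq_card.
apply/subsetP => _ /imsetP[[h1 h2] hx ->]; rewrite !inE /= in hx *.
by rewrite -sb_theta_comp (eqP hx).
Qed.

Lemma card_theta_fiber a b c :
  #|theta_fiber c (sb_theta A a b c)| = #|theta_fiber c c|.
Proof.
apply/anti_leq/andP; split; last exact: card_theta_fiber_le.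
by have := card_theta_fiber_le (lambda (cinv b) a^-1) (cinv b) c (sb_theta A a b c);
  rewrite sb_thetaK.
Qed.

Lemma card_theta_orbit_dvd c : #|theta_orbit A c| %| (#|[set: addT]| ^ 2)%N.
Proof.
rewrite cardsT -mulnn -card_prod -[X in _ %| X]sum1_card.
rewrite (partition_big (fun h : addT * addT => sb_theta A h.1 h.2 c)
  (mem (theta_orbit A c))) /=; last by move=> [a b] _; exact: sb_theta_in_orbit.
rewrite (eq_bigr (fun _ => #|theta_fiber c c|)) ?sum_nat_const ?dvdn_mulr //.
move=> _ /imset2P[a b _ _ ->]; rewrite -(card_theta_fiber a b c) sum1dep_card.
by apply: eq_card => h; rewrite !inE.
Qed.

Lemma small_theta_orbit_center c : #|theta_orbit A c| <= 1 -> c \in Z.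
Proof.
move=> small; apply/centerT_P => w.
set d := sb_theta A w^-1 (1 : addT) c.
have sub : [set (c : T); d] \subset theta_orbit A c.
  by apply/subsetP => z; rewrite !inE => /orP[] /eqP ->;
    rewrite ?mem_theta_orbit ?sb_theta_in_orbit.
have /eqP dc : d == c.
  apply: contraLR small => ne; rewrite -ltnNge.
  by rewrite (leq_trans _ (subset_leq_card sub)) // cards2 eq_sym ne.
by move: dc; rewrite /d sb_thetaE lambda_one invgK -mulgA => /(canRL (mulKVg w)).
Qed.

Lemma unique_Theta_vertex_abelian :
  #|Theta_vertices A| = 1%N -> abelian [set: addT].
Proof.
move=> /eqP/cards1P[L HL].
have : L \in Theta_vertices A by rewrite HL set11.
rewrite inE => /andP[/imsetP[c _ Lc] _].
have outside_center x : x \notin theta_orbit A c -> x \in Z.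
  move=> xL; apply: small_theta_orbit_center; rewrite leqNgt; apply: contra xL => gt1.
  have : theta_orbit A x \in Theta_vertices A.
    by rewrite inE gt1 andbT; apply/imsetP; exists x.
  by rewrite HL Lc inE => /eqP <-; exact: mem_theta_orbit.
have [cZ|cZ] := boolP (c \in Z).
  apply/center_idP/setP => x; rewrite in_setT.
  have [/imset2P[a b _ _ ->]|/outside_center //] := boolP (x \in theta_orbit A c).
  by rewrite sb_theta_center.
have orbitE x : (x \in theta_orbit A c) = (x \in ~: Z).
  rewrite in_setC; apply/idP/idP => [/imset2P[a b _ _ ->]|].
    by rewrite sb_theta_center.
  by apply: contraR; exact: outside_center.
have order_noncentral : {in ~: Z, forall x, #[x] = #[c : addT]}.
  by move=> x; rewrite -orbitE => /imset2P[a b _ _ ->]; exact: order_sb_theta.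
have := noncentral_order_card_not_dvd cZ order_noncentral.
by rewrite -(card_sb_addT orbitE) card_theta_orbit_dvd.
Qed.

End SkewBraceAdditiveGroup.

Theorem mainTheorem19 (T : finType) (A : skew_brace T) :
  #|Theta_vertices A| = 1 ->
  forall x y : T, sb_add A x y = sb_add A y x.
Proof.
move=> /unique_Theta_vertex_abelian /centsP cAA x y.
exact: (cAA x (in_setT (x : sb_addT A)) y (in_setT (y : sb_addT A))).
Qed.
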